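(* Let $\mathsf{D}$ and $\mathsf{S}$ be optiongraphs, and suppose there are congruence relations $\theta$ on $\mathsf{D}$ and $\psi$ on $\mathsf{S}$ with $\mathsf{D}/\theta\cong\mathsf{S}/\psi$. Then the minimum quotients $\mathsf{D}/{\bowtie_\mathsf{D}}$ and $\mathsf{S}/{\bowtie_\mathsf{S}}$ are isomorphic.
   Context: An optiongraph is a nonempty set $\mathsf{D}$ of positions with an option function $\mathrm{Opt}_\mathsf{D}:\mathsf{D}\to 2^{\mathsf{D}}$. A map is option preserving if $\mathrm{Opt}_\mathsf{D}(f(p))=f(\mathrm{Opt}_\mathsf{C}(p))$; an isomorphism ($\cong$) is a bijective option-preserving map. For an equivalence relation $\theta$, $[p]_\theta$ is the class of $p$ and $[S]_\theta:=\{[s]_\theta\mid s\in S\}$; $\theta$ is a congruence relation if $p\mathrel{\theta}q$ implies $[\mathrm{Opt}(p)]_\theta=[\mathrm{Opt}(q)]_\theta$. The quotient $\mathsf{D}/\theta$ has positions the $\theta$-classes and $\mathrm{Opt}([p]_\theta):=[\mathrm{Opt}_\mathsf{D}(p)]_\theta$. For an optiongraph $\mathsf{E}$, $\bowtie_\mathsf{E}$ is the union of all congruence relations on $\mathsf{E}$ (the maximum congruence) and $\mathsf{E}/{\bowtie_\mathsf{E}}$ is its minimum quotient. *)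

Set Implicit Arguments.

(* An optiongraph: a nonempty type of positions with an option function.
   [Opt p q] means q ∈ Opt(p). *)
Record optiongraph : Type := {
  pos : Type;
  pos_nonempty : inhabited pos;
  Opt : pos -> pos -> Prop
}.

Definition image (A B : Type) (f : A -> B) (S : A -> Prop) : B -> Prop :=
  fun y => exists x, S x /\ f x = y.

Definition option_preserving (C D : optiongraph) (f : pos C -> pos D) : Prop :=
  forall p : pos C, Opt D (f p) = image f (Opt C p).

Definition bijective_map (A B : Type) (f : A -> B) : Prop :=
  (forall x y, f x = f y -> x = y) /\ (forall y, exists x, f x = y).

Definition isomorphic (C D : optiongraph) : Prop :=
  exists f : pos C -> pos D, bijective_map f /\ @option_preserving C D f.

Definition equivalence_rel (A : Type) (R : A -> A -> Prop) : Prop :=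
  (forall x, R x x) /\ (forall x y, R x y -> R y x) /\
  (forall x y z, R x y -> R y z -> R x z).

Definition eclass (A : Type) (th : A -> A -> Prop) (p : A) : A -> Prop :=
  fun q => th p q.

Definition eclasses (A : Type) (th : A -> A -> Prop) (S : A -> Prop)
  : (A -> Prop) -> Prop := image (eclass th) S.

Definition congruence (D : optiongraph) (th : pos D -> pos D -> Prop) : Prop :=
  equivalence_rel th /\
  (forall p q, th p q -> eclasses th (Opt D p) = eclasses th (Opt D q)).

Definition qpos (D : optiongraph) (th : pos D -> pos D -> Prop) : Type :=
  { A : pos D -> Prop | exists p, A = eclass th p }.

Definition qpos_of (D : optiongraph) (th : pos D -> pos D -> Prop) (p : pos D)
  : qpos D th := exist _ (eclass th p) (ex_intro _ p eq_refl).

(* Opt([p]) := [Opt(p)]  (well defined when theta is a congruence) *)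
Definition qOpt (D : optiongraph) (th : pos D -> pos D -> Prop)
  (A B : qpos D th) : Prop :=
  exists p, proj1_sig A = eclass th p /\ eclasses th (Opt D p) (proj1_sig B).

Definition quotient (D : optiongraph) (th : pos D -> pos D -> Prop)
  : optiongraph :=
  {| pos := qpos D th;
     pos_nonempty :=
       match pos_nonempty D with inhabits p => inhabits (qpos_of D th p) end;
     Opt := @qOpt D th |}.

Definition bowtie (D : optiongraph) : pos D -> pos D -> Prop :=
  fun p q => exists th : pos D -> pos D -> Prop, @congruence D th /\ th p q.

From Stdlib Require Import FunctionalExtensionality PropExtensionality ProofIrrelevance ClassicalEpsilon.
Set Implicit Arguments.

(* The maximum congruence is bisimilarity, and bisimilarity is both preserved
   and reflected by any option-preserving map.  Hence a surjective
   option-preserving map f : C -> D induces an isomorphism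
   C/bowtie_C ≅ D/bowtie_D, [p] |-> [f p].  Applying this to the projections
   D -> D/theta ≅ S/psi <- S identifies both minimum quotients with the
   minimum quotient of D/theta. *)

Lemma pred_ext (A : Type) (P Q : A -> Prop) : (forall x, P x <-> Q x) -> P = Q.
Proof.
  intro H. apply functional_extensionality; intro x.
  apply propositional_extensionality, H.
Qed.

Lemma image_comp (A B C : Type) (f : A -> B) (g : B -> C) (P : A -> Prop) :
  image g (image f P) = image (fun x => g (f x)) P.
Proof.
  apply pred_ext; intro z; split.
  - intros [y [[x [Hx <-]] <-]]. exists x; auto.
  - intros [x [Hx <-]]. exists (f x). split; auto. exists x; auto.
Qed.

Lemma eclass_eq_iff (A : Type) (R : A -> A -> Prop) :
  equivalence_rel R -> forall x y, eclass R x = eclass R y <-> R x y.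
Proof.
  intros [Rrefl [Rsym Rtrans]] x y. split.
  - intro E. assert (Hy : eclass R y y) by apply Rrefl.
    rewrite <- E in Hy. exact Hy.
  - intro Rxy. apply pred_ext; intro z; unfold eclass; split; eauto.
Qed.


Section Quotient.
Variables (D : optiongraph) (th : pos D -> pos D -> Prop).

Lemma qpos_ext (A B : qpos D th) : proj1_sig A = proj1_sig B -> A = B.
Proof.
  destruct A as [a pa], B as [b pb]; simpl; intros <-.
  f_equal; apply proof_irrelevance.
Qed.

Lemma qpos_of_surj (A : qpos D th) : exists p, qpos_of D th p = A.
Proof.
  destruct (proj2_sig A) as [p E]. exists p. apply qpos_ext. now rewrite E.
Qed.

Hypothesis th_cong : congruence D th.

Lemma qpos_of_eq_iff p q : qpos_of D th p = qpos_of D th q <-> th p q.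
Proof.
  rewrite <- (eclass_eq_iff (proj1 th_cong)). split.
  - intro E. exact (f_equal (@proj1_sig _ _) E).
  - intro E. now apply qpos_ext.
Qed.

Lemma qOpt_qpos_of p (Y : qpos D th) :
  qOpt (qpos_of D th p) Y <-> eclasses th (Opt D p) (proj1_sig Y).
Proof.
  split.
  - intros [d [Ed H]]. simpl in Ed.
    apply (eclass_eq_iff (proj1 th_cong)) in Ed.
    now rewrite (proj2 th_cong p d Ed).
  - intro H. now exists p.
Qed.

Lemma qpos_of_option_preserving : option_preserving D (quotient D th) (qpos_of D th).
Proof.
  intro p. apply pred_ext; intro Y. simpl. rewrite qOpt_qpos_of. split.
  - intros [y [Hy E]]. exists y. split; auto. now apply qpos_ext.
  - intros [y [Hy <-]]. now exists y.
Qed.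

End Quotient.


Definition bisimulation (D : optiongraph) (R : pos D -> pos D -> Prop) : Prop :=
  forall p q, R p q ->
    (forall x, Opt D p x -> exists y, Opt D q y /\ R x y) /\
    (forall y, Opt D q y -> exists x, Opt D p x /\ R x y).

Definition bisimilar (D : optiongraph) : pos D -> pos D -> Prop :=
  fun p q => exists R, bisimulation D R /\ R p q.

Lemma bisimilar_bisimulation (D : optiongraph) : bisimulation D (bisimilar D).
Proof.
  intros p q [R [HR Rpq]]. destruct (HR p q Rpq) as [Hl Hr]. split.
  - intros x Hx. destruct (Hl x Hx) as [y [Hy Rxy]]. exists y. split; auto. now exists R.
  - intros y Hy. destruct (Hr y Hy) as [x [Hx Rxy]]. exists x. split; auto. now exists R.
Qed.

Lemma bisimilar_equiv (D : optiongraph) : equivalence_rel (bisimilar D).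
Proof.
  split; [|split].
  - intro x. exists eq. split; auto.
    intros p q <-. split; intros z Hz; exists z; auto.
  - intros x y [R [HR Rxy]]. exists (fun a b => R b a). split; auto.
    intros p q Rqp. destruct (HR q p Rqp) as [Hl Hr]. split.
    + intros z Hz. destruct (Hr z Hz) as [w [Hw Rwz]]. exists w; auto.
    + intros z Hz. destruct (Hl z Hz) as [w [Hw Rzw]]. exists w; auto.
  - intros x y z [R1 [H1 Rxy]] [R2 [H2 Ryz]].
    exists (fun a c => exists b, R1 a b /\ R2 b c). split; eauto.
    intros p r [q [Rpq Rqr]].
    destruct (H1 p q Rpq) as [A1 A2], (H2 q r Rqr) as [B1 B2]. split.
    + intros a Ha. destruct (A1 a Ha) as [b [Hb Rab]].
      destruct (B1 b Hb) as [c [Hc Rbc]]. exists c; eauto.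
    + intros c Hc. destruct (B2 c Hc) as [b [Hb Rbc]].
      destruct (A2 b Hb) as [a [Ha Rab]]. exists a; eauto.
Qed.

Lemma bisimilar_congruence (D : optiongraph) : congruence D (bisimilar D).
Proof.
  split; [apply bisimilar_equiv|].
  intros p q Hpq. destruct (bisimilar_bisimulation Hpq) as [Hl Hr].
  pose proof (eclass_eq_iff (bisimilar_equiv D)) as Eq.
  pose proof (proj1 (proj2 (bisimilar_equiv D))) as Bsym.
  apply pred_ext; intro A; split.
  - intros [x [Hx <-]]. destruct (Hl x Hx) as [y [Hy Bxy]].
    exists y. split; auto. now apply Eq, Bsym.
  - intros [y [Hy <-]]. destruct (Hr y Hy) as [x [Hx Bxy]].
    exists x. split; auto. now apply Eq.
Qed.

Lemma congruence_bisimulation (D : optiongraph) (th : pos D -> pos D -> Prop) :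
  congruence D th -> bisimulation D th.
Proof.
  intros [th_equiv th_opt] p q Hpq.
  pose proof (eclass_eq_iff th_equiv) as Eq.
  destruct th_equiv as [_ [th_sym _]]. split.
  - intros x Hx. assert (H : eclasses th (Opt D p) (eclass th x)) by (exists x; auto).
    rewrite (th_opt p q Hpq) in H. destruct H as [y [Hy E]].
    exists y. split; auto. now apply th_sym, Eq.
  - intros y Hy. assert (H : eclasses th (Opt D q) (eclass th y)) by (exists y; auto).
    rewrite <- (th_opt p q Hpq) in H. destruct H as [x [Hx E]].
    exists x. split; auto. now apply Eq.
Qed.

Lemma bowtie_bisimilar (D : optiongraph) : bowtie D = bisimilar D.
Proof.
  apply functional_extensionality; intro p. apply pred_ext; intro q. split.
  - intros [th [Hth Hpq]]. exists th. split; auto. now apply congruence_bisimulation.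
  - intro H. exists (bisimilar D). split; auto. apply bisimilar_congruence.
Qed.

Lemma option_preserving_bisimilar (C D : optiongraph) (f : pos C -> pos D) :
  option_preserving C D f -> forall p q, bisimilar C p q <-> bisimilar D (f p) (f q).
Proof.
  intros Hf p q. split.
  - intro H. exists (fun a b => exists p q, f p = a /\ f q = b /\ bisimilar C p q).
    split; [| exists p, q; auto].
    intros a b [p' [q' [<- [<- Hb]]]].
    destruct (bisimilar_bisimulation Hb) as [Hl Hr]. split.
    + intros x'. rewrite Hf. intros [x [Hx <-]].
      destruct (Hl x Hx) as [y [Hy Bxy]]. exists (f y). split.
      * rewrite Hf. now exists y.
      * now exists x, y.
    + intros y'. rewrite Hf. intros [y [Hy <-]].
      destruct (Hr y Hy) as [x [Hx Bxy]]. exists (f x). split.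
      * rewrite Hf. now exists x.
      * now exists x, y.
  - intro H. exists (fun a b => bisimilar D (f a) (f b)). split; auto.
    intros a b Hab. destruct (bisimilar_bisimulation Hab) as [Hl Hr]. split.
    + intros x Hx. assert (Hfx : Opt D (f a) (f x)) by (rewrite Hf; now exists x).
      destruct (Hl _ Hfx) as [y' [Hy' B]]. rewrite Hf in Hy'.
      destruct Hy' as [y [Hy <-]]. now exists y.
    + intros y Hy. assert (Hfy : Opt D (f b) (f y)) by (rewrite Hf; now exists y).
      destruct (Hr _ Hfy) as [x' [Hx' B]]. rewrite Hf in Hx'.
      destruct Hx' as [x [Hx <-]]. now exists x.
Qed.


Section InducedIsomorphism.
Variables (C D : optiongraph) (f : pos C -> pos D).
Variables (thC : pos C -> pos C -> Prop) (thD : pos D -> pos D -> Prop).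
Hypothesis f_opt : option_preserving C D f.
Hypothesis f_surj : forall y, exists x, f x = y.
Hypothesis thC_cong : congruence C thC.
Hypothesis thD_cong : congruence D thD.
Hypothesis f_reflects : forall p q, thC p q <-> thD (f p) (f q).

Definition induced_class (A : qpos C thC) : pos D -> Prop :=
  fun b => exists p, proj1_sig A p /\ thD (f p) b.

Lemma induced_class_qpos_of p :
  induced_class (qpos_of C thC p) = eclass thD (f p).
Proof.
  destruct thD_cong as [[_ [_ thD_trans]] _].
  apply pred_ext; intro b; split.
  - intros [p' [Hp' Hb]]. apply f_reflects in Hp'. exact (thD_trans _ _ _ Hp' Hb).
  - intro H. exists p. split; auto. apply (proj1 (proj1 thC_cong)).
Qed.

Definition induced_map (A : qpos C thC) : qpos D thD.
Proof.
  exists (induced_class A).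
  destruct (proj2_sig A) as [p E]. exists (f p).
  replace A with (qpos_of C thC p) by (apply qpos_ext; now rewrite E).
  apply induced_class_qpos_of.
Defined.

Lemma induced_map_qpos_of p : induced_map (qpos_of C thC p) = qpos_of D thD (f p).
Proof. apply qpos_ext, induced_class_qpos_of. Qed.

Lemma induced_map_iso : isomorphic (quotient C thC) (quotient D thD).
Proof.
  exists induced_map. split; [split|].
  - intros A A'.
    destruct (qpos_of_surj A) as [p <-], (qpos_of_surj A') as [q <-].
    rewrite !induced_map_qpos_of. intro E.
    apply (qpos_of_eq_iff thC_cong), f_reflects, (qpos_of_eq_iff thD_cong), E.
  - intro Y. destruct (qpos_of_surj Y) as [b <-]. destruct (f_surj b) as [p <-].
    exists (qpos_of C thC p). apply induced_map_qpos_of.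
  - intro A. destruct (qpos_of_surj A) as [p <-].
    rewrite induced_map_qpos_of.
    rewrite (qpos_of_option_preserving thD_cong (f p)), f_opt.
    rewrite (qpos_of_option_preserving thC_cong p), !image_comp.
    f_equal. apply functional_extensionality; intro x.
    now rewrite induced_map_qpos_of.
Qed.

End InducedIsomorphism.

Lemma minimum_quotient_iso_of_surj (C D : optiongraph) (f : pos C -> pos D) :
  option_preserving C D f -> (forall y, exists x, f x = y) ->
  isomorphic (quotient C (bowtie C)) (quotient D (bowtie D)).
Proof.
  intros f_opt f_surj. rewrite !bowtie_bisimilar.
  apply (induced_map_iso f_opt f_surj (bisimilar_congruence C) (bisimilar_congruence D)).
  now apply option_preserving_bisimilar.
Qed.


Lemma option_preserving_comp (A B C : optiongraph)
  (f : pos A -> pos B) (g : pos B -> pos C) :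
  option_preserving A B f -> option_preserving B C g ->
  option_preserving A C (fun x => g (f x)).
Proof. intros Hf Hg p. now rewrite Hg, Hf, image_comp. Qed.

Lemma isomorphic_sym (C D : optiongraph) : isomorphic C D -> isomorphic D C.
Proof.
  intros [f [[f_inj f_surj] f_opt]].
  set (g := fun y => proj1_sig (constructive_indefinite_description _ (f_surj y))).
  assert (fg : forall y, f (g y) = y).
  { intro y. unfold g. now destruct constructive_indefinite_description. }
  assert (gf : forall x, g (f x) = x) by (intro x; apply f_inj, fg).
  exists g. split; [split|].
  - intros a b E. now rewrite <- (fg a), <- (fg b), E.
  - intro x. exists (f x). apply gf.
  - intro y. rewrite <- (fg y) at 2. rewrite f_opt, image_comp.
    apply pred_ext; intro z; split.
    + intro H. exists z. auto.
    + intros [x [Hx <-]]. now rewrite gf.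
Qed.

Lemma isomorphic_trans (C D E : optiongraph) :
  isomorphic C D -> isomorphic D E -> isomorphic C E.
Proof.
  intros [f [[f_inj f_surj] f_opt]] [g [[g_inj g_surj] g_opt]].
  exists (fun x => g (f x)). split; [split|].
  - auto.
  - intro z. destruct (g_surj z) as [y <-]. destruct (f_surj y) as [x <-]. now exists x.
  - now apply option_preserving_comp.
Qed.

Theorem mainTheorem14 (D S : optiongraph)
  (th : pos D -> pos D -> Prop) (ps : pos S -> pos S -> Prop) :
  congruence D th -> congruence S ps ->
  isomorphic (quotient D th) (quotient S ps) ->
  isomorphic (quotient D (bowtie D)) (quotient S (bowtie S)).
Proof.
  intros th_cong ps_cong [g [[_ g_surj] g_opt]].
  set (E := quotient S ps).
  assert (HD : isomorphic (quotient D (bowtie D)) (quotient E (bowtie E))).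
  { apply (@minimum_quotient_iso_of_surj D E (fun x => g (qpos_of D th x))).
    - apply option_preserving_comp; auto. now apply qpos_of_option_preserving.
    - intro z. destruct (g_surj z) as [y <-].
      destruct (qpos_of_surj y) as [x <-]. now exists x. }
  assert (HS : isomorphic (quotient S (bowtie S)) (quotient E (bowtie E))).
  { apply (@minimum_quotient_iso_of_surj S E (qpos_of S ps)).
    - now apply qpos_of_option_preserving.
    - apply qpos_of_surj. }
  exact (isomorphic_trans HD (isomorphic_sym HS)).
Qed.
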